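(* Let $W$ and $H$ be arbitrary finite simple graphs, $U\subseteq V(W)$, and $G=W(U)\sqcap H$. Then \[Z(G)\le\min\bigl\{\,Z(W)\,|V(H)|,\ \ Z(H)\,|U|+(|V(W)|-|U|)\,|V(H)|\,\bigr\}.\]
   Context: All graphs are finite, simple and undirected. Zero forcing: given a graph $G$ and a set $S\subseteq V(G)$ of initially filled vertices, the color change rule says that if a filled vertex $v$ has exactly one unfilled neighbor $u$, then $v$ forces $u$ to become filled. $S$ is a zero forcing set if repeatedly applying this rule eventually fills every vertex of $G$. The zero forcing number $Z(G)$ is the minimum cardinality of a zero forcing set of $G$. Generalized hierarchical product: for graphs $W,H$ and $U\subseteq V(W)$ (the root set), $W(U)\sqcap H$ is the graph with vertex set $V(W)\times V(H)$ in which $(x_1,y_1)$ and $(x_2,y_2)$ are adjacent iff either ($x_1=x_2\in U$ and $y_1y_2\in E(H)$) or ($y_1=y_2$ and $x_1x_2\in E(W)$). *)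

From mathcomp Require Import all_boot.
Set Implicit Arguments. Unset Strict Implicit. Unset Printing Implicit Defensive.

Definition simple_graph (T : finType) (e : rel T) : Prop :=
  symmetric e /\ irreflexive e.

Definition force_step (T : finType) (e : rel T) (S : {set T}) : {set T} :=
  S :|: [set u | [exists v, [&& v \in S, u \notin S, e v u &
          [forall w, (e v w && (w \notin S)) ==> (w == u)]]]].

(* Closure under the colour change rule (#|T| rounds suffice). *)
Definition force_closure (T : finType) (e : rel T) (S : {set T}) : {set T} :=
  iter #|T| (force_step e) S.

Definition zero_forcing_set (T : finType) (e : rel T) (S : {set T}) : bool :=
  force_closure e S == [set: T].

(* Zero forcing number: minimum cardinality of a zero forcing set
   ([set: T] is always one, so #|T| is a valid default). *)
Definition Z (T : finType) (e : rel T) : nat :=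
  \big[minn/#|T|]_(S : {set T} | zero_forcing_set e S) #|S|.

Definition hier_prod (TW TH : finType) (eW : rel TW) (U : {set TW})
  (eH : rel TH) : rel (TW * TH) :=
  fun p q => ((p.1 == q.1) && (p.1 \in U) && eH p.2 q.2)
          || ((p.2 == q.2) && eW p.1 q.1).

(* A set is zero forcing exactly when every stalled superset, one in which no
   filled vertex has a unique unfilled neighbour, is the whole vertex set.
   Let X be stalled in W(U) ⊓ H.  If X contains S_W × V(H), the w whose whole
   H-fibre lies in X form a stalled set of W containing S_W: a filled (v, h)
   with unfilled W-neighbour (u, h) has a second unfilled neighbour, which
   cannot lie in the full fibre of v, so it is some (w, h) with w another
   unfilled W-neighbour of v.  Symmetrically, if X contains
   (V(W) \ U) × V(H) ∪ U × S_H, the h with U × {h} ⊆ X form a stalled set of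
   H containing S_H, since the vertices outside U × V(H) are already filled.
   Either stalled set is everything, hence so is X. *)

From mathcomp Require Import all_boot all_order.
Set Implicit Arguments. Unset Strict Implicit. Unset Printing Implicit Defensive.
Import Order.TTheory.

Lemma iter_extensive_fixpoint (T : finType) (F : {set T} -> {set T})
    (S : {set T}) :
  (forall X : {set T}, X \subset F X) -> F (iter #|T| F S) = iter #|T| F S.
Proof.
move=> F_ext.
have strict X : F X != X -> #|X| < #|F X|.
  by move=> nfix; apply: proper_card; rewrite properEneq F_ext andbT eq_sym.
have grow n : F (iter n F S) = iter n F S \/ n <= #|iter n F S|.
  elim: n => [|n [fixn | len_n]]; [by right | by left; rewrite /= fixn |].
  have [fixn | /strict] := eqVneq (F (iter n F S)) (iter n F S).
    by left; rewrite /= fixn.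
  by right; apply: leq_ltn_trans len_n _.
have [// | big] := grow #|T|; apply/eqP; apply: contraT => /strict.
by rewrite ltnNge (leq_trans (max_card _) big).
Qed.

Section ZeroForcing.
Variables (T : finType) (e : rel T).

Definition stalled (X : {set T}) : Prop :=
  forall v u, v \in X -> u \notin X -> e v u ->
    exists w, [/\ e v w, w \notin X & w != u].

Lemma force_step_subset (X : {set T}) : X \subset force_step e X.
Proof. exact: subsetUl. Qed.

Lemma force_step_sub_stalled (Y X : {set T}) :
  Y \subset X -> stalled X -> force_step e Y \subset X.
Proof.
move=> sYX stX; apply/subsetP => u; rewrite in_setU => /orP[/(subsetP sYX)//|].
rewrite inE => /existsP[v /and4P[vY _ evu /forallP unique_u]].
apply: contraT => uX; have [w [evw wX wu]] := stX v u (subsetP sYX v vY) uX evu.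
have wY : w \notin Y by apply: contra wX; apply: subsetP.
by move: (unique_u w); rewrite evw wY (negbTE wu).
Qed.

Lemma subset_force_closure (S : {set T}) : S \subset force_closure e S.
Proof.
rewrite /force_closure; elim: #|T| => [|n IHn] //=.
exact: subset_trans IHn (force_step_subset _).
Qed.

Lemma force_closure_sub_stalled (S X : {set T}) :
  S \subset X -> stalled X -> force_closure e S \subset X.
Proof.
move=> sSX stX; rewrite /force_closure; elim: #|T| => [|n IHn] //=.
exact: force_step_sub_stalled.
Qed.

Lemma force_closure_stalled (S : {set T}) : stalled (force_closure e S).
Proof.
set C := force_closure e S; move=> v u vC uC evu.
have fixC : force_step e C = C by apply: iter_extensive_fixpoint force_step_subset.
suff /existsP[w /and3P[evw wC wu]] :
  [exists w, [&& e v w, w \notin C & w != u]] by exists w.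
apply: contraT => none.
have : u \in force_step e C.
  rewrite in_setU inE; apply/orP; right; apply/existsP; exists v.
  rewrite vC uC evu /=; apply/forallP => w; apply/implyP => /andP[evw wC].
  by apply: contraT => wu; case/existsP: none; exists w; rewrite evw wC wu.
by rewrite fixC (negbTE uC).
Qed.

Lemma zero_forcingP (S : {set T}) :
  reflect (forall X : {set T}, S \subset X -> stalled X -> X = [set: T])
          (zero_forcing_set e S).
Proof.
apply: (iffP eqP) => [closureT X sSX stX | allT].
  by apply/eqP; rewrite eqEsubset subsetT -closureT force_closure_sub_stalled.
by apply: allT; [apply: subset_force_closure | apply: force_closure_stalled].
Qed.

Lemma Z_min (S : {set T}) : zero_forcing_set e S -> Z e <= #|S|.
Proof.
move=> zfS; rewrite /Z -minEnat.
exact: (bigmin_le_cond _ (fun S : {set T} => #|S|) zfS).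
Qed.

Lemma Z_attained : exists2 S, zero_forcing_set e S & #|S| = Z e.
Proof.
have zfT : zero_forcing_set e [set: T].
  by apply/zero_forcingP => X; rewrite subTset => /eqP.
rewrite /Z -minEnat.
have [S zfS ->] := eq_bigmin (x := #|T|) _ _ (fun S : {set T} => #|S|) zfT
  (fun S _ => max_card S).
by exists S.
Qed.

End ZeroForcing.

Section HierarchicalProduct.
Variables (TW TH : finType) (eW : rel TW) (eH : rel TH) (U : {set TW}).

Local Notation G := (hier_prod eW U eH).

Lemma zero_forcing_hier_prod_of_base (SW : {set TW}) :
  zero_forcing_set eW SW -> zero_forcing_set G (setX SW [set: TH]).
Proof.
move=> /zero_forcingP zfW; apply/zero_forcingP => X sSX stX.
pose Y := [set w | [forall h, (w, h) \in X]].
have sSY : SW \subset Y.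
  apply/subsetP => w wS; rewrite inE; apply/forallP => h.
  by apply: (subsetP sSX); rewrite in_setX wS in_setT.
have stY : stalled eW Y.
  move=> v u; rewrite !inE negb_forall => /forallP vY /existsP[h uhX] evu.
  have evhuh : G (v, h) (u, h) by rewrite /hier_prod /= eqxx evu orbT.
  have [[w h'] [Gq qX qu]] := stX _ _ (vY h) uhX evhuh.
  move: qX qu; rewrite /hier_prod /= in Gq.
  case/orP: Gq => [/andP[/andP[/eqP<- _] _] | /andP[/eqP<- evw]] qX qu.
    by rewrite vY in qX.
  exists w; split=> //; last by apply: contraNneq qu => ->.
  by rewrite inE negb_forall; apply/existsP; exists h.
have YT := zfW Y sSY stY.
apply/setP => -[w h]; rewrite in_setT.
by have := in_setT w; rewrite -YT inE => /forallP ->.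
Qed.

Lemma zero_forcing_hier_prod_of_fibre (SH : {set TH}) :
  zero_forcing_set eH SH ->
  zero_forcing_set G (setX (~: U) [set: TH] :|: setX U SH).
Proof.
move=> /zero_forcingP zfH; apply/zero_forcingP => X sSX stX.
have outside_U w h : w \notin U -> (w, h) \in X.
  by move=> wU; apply: (subsetP sSX); rewrite !inE wU.
pose Y := [set h | [forall w in U, (w, h) \in X]].
have sSY : SH \subset Y.
  apply/subsetP => h hS; rewrite inE; apply/forall_inP => w wU.
  by apply: (subsetP sSX); rewrite !inE wU hS orbT.
have stY : stalled eH Y.
  move=> v u; rewrite !inE negb_forall_in => /forall_inP vY.
  case/exists_inP => w wU wuX evu.
  have Gwvwu : G (w, v) (w, u) by rewrite /hier_prod /= eqxx wU evu.
  have [[w' h] [Gq qX qu]] := stX _ _ (vY w wU) wuX Gwvwu.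
  move: qX qu; rewrite /hier_prod /= in Gq.
  case/orP: Gq => [/andP[/andP[/eqP<- _] evh] | /andP[/eqP<- _]] qX qu.
    exists h; split=> //; last by apply: contraNneq qu => ->.
    by rewrite inE negb_forall_in; apply/exists_inP; exists w.
  by move/negP: qX; case: (boolP (w' \in U)) => [/vY | /outside_U].
have YT := zfH Y sSY stY.
apply/setP => -[w h]; rewrite in_setT.
have [wU | /(outside_U _ h) -> //] := boolP (w \in U).
by have := in_setT h; rewrite -YT inE => /forall_inP; apply.
Qed.

End HierarchicalProduct.

Lemma card_root_fibre_set (TW TH : finType) (U : {set TW}) (SH : {set TH}) :
  #|setX (~: U) [set: TH] :|: setX U SH| =
    #|SH| * #|U| + (#|TW| - #|U|) * #|TH|.
Proof.
have disj : setX (~: U) [set: TH] :&: setX U SH = set0.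
  by apply/setP => -[w h]; rewrite !inE; case: (w \in U); rewrite ?andbF.
rewrite cardsU disj cards0 subn0 !cardsX cardsT -(cardsC U) addKn.
by rewrite addnC mulnC.
Qed.

(* Neither bound uses that the graphs are simple. *)
Theorem mainTheorem11 (TW TH : finType) (eW : rel TW) (eH : rel TH)
  (U : {set TW}) :
  simple_graph eW -> simple_graph eH ->
  Z (hier_prod eW U eH) <=
    minn (Z eW * #|TH|) (Z eH * #|U| + (#|TW| - #|U|) * #|TH|).
Proof.
move=> _ _; rewrite leq_min; apply/andP; split.
  have [SW zfW <-] := Z_attained eW.
  rewrite -[#|TH|]cardsT -cardsX.
  exact/Z_min/zero_forcing_hier_prod_of_base.
have [SH zfH <-] := Z_attained eH.
rewrite -card_root_fibre_set.
exact/Z_min/zero_forcing_hier_prod_of_fibre.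
Qed.
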